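(* Let $G=(V,E)$ be a simple graph with $n\ge 2$ vertices and $|E|=2n-3$. Let $e\in E$, and let $G^*$ be the multigraph obtained from $G$ by adding a parallel copy $e_{add}$ of $e$. Suppose the edge set of $G^*$ is partitioned into two edge-disjoint spanning trees $T^r$ (red) and $T^b$ (black) with $e_{add}\in T^b$. Run the decomposition procedure on $(G^*,T^r,T^b)$. Then $G$ is a Laman graph if and only if every edge of $G^*$ is deleted by the time the procedure terminates.
   Context: A graph $G$ with $n$ vertices and $m$ edges is a Laman graph if $m=2n-3$ and, for every $k\ge 2$, every set of $k$ vertices induces at most $2k-3$ edges. Each edge of $G^*$ carries the color of the tree containing it. Decomposition procedure. Step 1 deletes $e_{add}$. For $i=2,3,\dots$, let $c_i$ be red if $i$ is even and black if $i$ is odd, and let $\bar c_i$ be the other color. Let $F$ be the set of not-yet-deleted edges of color $\bar c_i$. Step $i$ deletes, simultaneously, every not-yet-deleted edge of color $c_i$ whose two endpoints lie in different connected components of the graph $(V,F)$. The procedure terminates at the first step $i\ge 2$ in which no edge is deleted. *)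

From mathcomp Require Import all_boot.
Set Implicit Arguments. Unset Strict Implicit. Unset Printing Implicit Defensive.

Definition simple_graph (V : finType) (E : {set {set V}}) : Prop :=
  forall f, f \in E -> #|f| = 2.

Definition laman (V : finType) (E : {set {set V}}) : Prop :=
  #|E| = 2 * #|V| - 3 /\
  forall X : {set V}, 2 <= #|X| -> #|[set f in E | f \subset X]| <= 2 * #|X| - 3.

(* The multigraph G* : its edges are indexed by option {set V};
   [Some f] (for f in E) is the original edge f, [None] is the added
   parallel copy e_add of e. *)
Definition ends (V : finType) (e : {set V}) (o : option {set V}) : {set V} :=
  if o is Some f then f else e.

Definition edgesStar (V : finType) (E : {set {set V}}) : {set option {set V}} :=
  [set o | if o is Some f then f \in E else true].

Definition adj (V : finType) (e : {set V}) (F : {set option {set V}}) : rel V :=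
  fun x y => [exists o in F, [&& x != y, x \in ends e o & y \in ends e o]].

Definition same_comp (V : finType) (e : {set V}) (F : {set option {set V}})
  (o : option {set V}) : bool :=
  [forall x in ends e o, forall y in ends e o, connect (adj e F) x y].

Definition spanning_tree (V : finType) (e : {set V}) (F : {set option {set V}}) : Prop :=
  (forall x y : V, connect (adj e F) x y) /\
  (forall o, o \in F -> ~~ same_comp e (F :\ o) o).

(* colouring: col o = true means red, false means black *)
Definition color_step (i : nat) : bool := ~~ odd i. (* c_i: red iff i even *)

(* edges deleted at step i >= 2 given the set D of already deleted edges *)
Definition newdel (V : finType) (E : {set {set V}}) (e : {set V})
  (col : option {set V} -> bool) (i : nat) (D : {set option {set V}}) :
  {set option {set V}} :=
  let F := [set o in edgesStar E | (o \notin D) && (col o == ~~ color_step i)] in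
  [set o in edgesStar E | [&& o \notin D, col o == color_step i &
                              ~~ same_comp e F o]].

Fixpoint deleted (V : finType) (E : {set {set V}}) (e : {set V})
  (col : option {set V} -> bool) (i : nat) : {set option {set V}} :=
  match i with
  | 0 => set0
  | 1 => [set None]
  | (j.+1) as k => deleted E e col j :|: newdel E e col k (deleted E e col j)
  end.

Definition terminates_at (V : finType) (E : {set {set V}}) (e : {set V})
  (col : option {set V} -> bool) (i : nat) : Prop :=
  2 <= i /\ newdel E e col i (deleted E e col i.-1) = set0 /\
  (forall j, 2 <= j < i -> newdel E e col j (deleted E e col j.-1) != set0).

From mathcomp Require Import all_boot zify.
Set Implicit Arguments. Unset Strict Implicit. Unset Printing Implicit Defensive.

(* The engine is the rank formula for multigraphs ([rank_count]): if X is a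
   union of connected components of F, then |X| <= |edges of F inside X| +
   (number of components met by X), with equality when F is a forest.  It is
   proved by deleting edges one at a time, using that deleting a bridge splits
   one component into two ([ncomp_bridge]).

   (=>) Laman: the procedure stops ([procedure_terminates]), not at step 2
   ([step2_deletes]).  At the stall every surviving edge has its endpoints
   joined by surviving edges of the other colour ([stalled_same_comp]), so both
   colours induce the same components; the component X of a surviving edge then
   contains >= 2|X| - 2 surviving edges of G, against sparsity
   ([stalled_all_deleted]).
   (<=) If some X spans > 2|X| - 3 edges of G, the rank formula for the two
   trees forces both colours to span X connectedly and e_add to leave X; then
   no edge inside X is ever deleted ([block_never_deleted]), so the procedure
   cannot delete everything ([sparse_of_all_deleted]). *)

Section Connectivity.
Variables (V : finType) (e : {set V}).
Implicit Types (F : {set option {set V}}) (X : {set V}).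

Lemma adjP F x y :
  reflect (exists2 o, o \in F & [&& x != y, x \in ends e o & y \in ends e o])
          (adj e F x y).
Proof.
by apply: (iffP existsP) => -[o]; [case/andP=> oF H | move=> oF H]; exists o;
  rewrite ?oF.
Qed.

Lemma adj_sym F : symmetric (adj e F).
Proof.
move=> x y; apply/adjP/adjP => -[o oF /and3P[nxy xo yo]];
  by exists o; rewrite // eq_sym nxy xo yo.
Qed.

Lemma adj_connect_sym F : connect_sym (adj e F).
Proof. exact: sym_connect_sym (adj_sym F). Qed.

Lemma adj_mono F1 F2 : F1 \subset F2 -> subrel (adj e F1) (adj e F2).
Proof.
by move=> s x y /adjP[o oF H]; apply/adjP; exists o; rewrite ?(subsetP s).
Qed.

Lemma connect_mono F1 F2 :
  F1 \subset F2 -> subrel (connect (adj e F1)) (connect (adj e F2)).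
Proof. by move=> s; apply: connect_sub => x y /(adj_mono s)/connect1. Qed.

Lemma connect_same_comp F1 F2 :
  {in F1, forall o, same_comp e F2 o} ->
  subrel (connect (adj e F1)) (connect (adj e F2)).
Proof.
move=> sc; apply: connect_sub => x y /adjP[o oF /and3P[_ xo yo]].
by move/forall_inP: (sc o oF) => /(_ x xo)/forall_inP/(_ y yo).
Qed.

Lemma same_comp_mono F1 F2 o :
  F1 \subset F2 -> same_comp e F1 o -> same_comp e F2 o.
Proof.
move=> s /forall_inP sc; apply/forall_inP => x xo; apply/forall_inP => y yo.
exact: (connect_mono s) (forall_inP (sc x xo) y yo).
Qed.

Lemma set2_of_card2 (A : {set V}) x z :
  #|A| = 2 -> x \in A -> z \in A -> x != z -> A = [set x; z].
Proof.
move=> cA xA zA nxz; apply/esym/eqP; rewrite eqEcard cA cards2 nxz andbT.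
by apply/subsetP => y /set2P[]->.
Qed.

Lemma same_comp2 F o a b :
  ends e o = [set a; b] -> same_comp e F o = connect (adj e F) a b.
Proof.
move=> eo; apply/idP/idP => [/forall_inP/(_ a)|ab].
  by rewrite eo set21 => /(_ isT)/forall_inP/(_ b); rewrite set22; apply.
apply/forall_inP => x; rewrite eo => /set2P[]->; apply/forall_inP => y;
  by move=> /set2P[]->; rewrite ?connect0 // adj_connect_sym.
Qed.

Definition acyclic F := forall o, o \in F -> ~~ same_comp e (F :\ o) o.

Lemma acyclic_sub F1 F2 : F1 \subset F2 -> acyclic F2 -> acyclic F1.
Proof.
move=> s ac o oF1; apply: contra (ac o (subsetP s o oF1)).
by apply: same_comp_mono; apply: setSD.
Qed.

Definition comp F x := [set y | connect (adj e F) x y].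
Definition ncomp F X := #|comp F @: X|.

Lemma comp_eq F x y : (comp F x == comp F y) = connect (adj e F) x y.
Proof.
apply/eqP/idP => [cxy | xy].
  have : y \in comp F y by rewrite inE connect0.
  by rewrite -cxy inE.
by apply/setP => z; rewrite !inE (same_connect (adj_connect_sym F) xy).
Qed.

Lemma ncomp_pos F X x : x \in X -> 0 < ncomp F X.
Proof.
by move=> xX; rewrite card_gt0; apply/set0Pn; exists (comp F x); apply: imset_f.
Qed.

Lemma ncomp1_connect F X x y :
  ncomp F X = 1 -> x \in X -> y \in X -> connect (adj e F) x y.
Proof.
move/eqP/cards1P => [C comps] xX yX; rewrite -comp_eq.
move: (imset_f (comp F) xX) (imset_f (comp F) yX).
by rewrite comps !inE => /eqP-> /eqP->.
Qed.

Lemma ncomp_le1 F X a :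
  {in X, forall y, connect (adj e F) a y} -> ncomp F X <= 1.
Proof.
move=> conn; rewrite -(cards1 (comp F a)); apply: subset_leq_card.
by apply/subsetP => C /imsetP[y yX ->]; rewrite inE eq_sym comp_eq conn.
Qed.

Lemma connect_delete_cycle_edge F o a b :
  ends e o = [set a; b] -> connect (adj e (F :\ o)) a b ->
  connect (adj e F) =2 connect (adj e (F :\ o)).
Proof.
move=> eo ab x y; apply/idP/idP; last exact/connect_mono/subsetDl.
apply: connect_sub => u v /adjP[o' o'F /and3P[nuv uo' vo']].
case: (eqVneq o' o) => [eqo | neo]; last first.
  by apply/connect1/adjP; exists o'; rewrite ?nuv ?uo' ?vo' // !inE neo.
move: uo' vo'; rewrite eqo eo => /set2P[]-> /set2P[]->; rewrite ?connect0 //.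
by rewrite adj_connect_sym.
Qed.

Lemma connect_rt_sub (R r : rel V) :
  reflexive R -> transitive R -> subrel r R -> subrel (connect r) R.
Proof.
move=> Rr Rt rR x y /connectP[p + ->]; elim: p x => //= z p IH x /andP[xz pz].
exact: Rt (rR _ _ xz) (IH _ pz).
Qed.

(* Deleting a bridge o = {a, b} of F: the F-component of a is the union U of
   the (F :\ o)-components of a and b, all other components are unchanged, so
   the number of components met by a set containing a and b grows by one. *)
Section BridgeDeletion.
Variables (F : {set option {set V}}) (o : option {set V}) (a b : V).
Hypotheses (oF : o \in F) (eo : ends e o = [set a; b]) (nab : a != b).
Let F' := F :\ o.
Let U := comp F' a :|: comp F' b.

Lemma bridge_U_closed x y : connect (adj e F') x y -> (x \in U) = (y \in U).
Proof. by move=> xy; rewrite !inE !(same_connect_r (adj_connect_sym F') xy). Qed.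

Lemma connect_bridge x y :
  connect (adj e F) x y = connect (adj e F') x y || (x \in U) && (y \in U).
Proof.
have F'F : F' \subset F by apply: subsetDl.
have ab : connect (adj e F) a b.
  by apply/connect1/adjP; exists o; rewrite // nab eo set21 set22.
have aU z : z \in U -> connect (adj e F) a z.
  case/setUP; rewrite inE => /(connect_mono F'F) //.
  exact: connect_trans ab.
apply/idP/idP => [|/orP[/(connect_mono F'F) // | /andP[xU yU]]]; last first.
  by apply: connect_trans (aU _ yU); rewrite adj_connect_sym aU.
move: x y; apply: connect_rt_sub => [x | y x z | x y].
- by rewrite connect0.
- case/orP=> [xy | /andP[xU yU]] /orP[yz | /andP[yU' zU]].
  + by rewrite (connect_trans xy yz).
  + by rewrite (bridge_U_closed xy) yU' zU orbT.
  + by rewrite xU -(bridge_U_closed yz) yU orbT.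
  + by rewrite xU zU orbT.
case/adjP=> o' o'F /and3P[nxy xo' yo']; case: (eqVneq o' o) => [eqo | neo].
  move: xo' yo'; rewrite eqo eo => /set2P[]-> /set2P[]->;
  by rewrite !inE !connect0 ?orbT.
by apply/orP; left; apply/connect1/adjP; exists o'; rewrite ?nxy ?xo' // !inE neo.
Qed.

Lemma comp_bridge x : comp F x = if x \in U then U else comp F' x.
Proof.
apply/setP => z; rewrite [in LHS]inE connect_bridge.
case: ifP => xU; last by rewrite andFb orbF inE.
case zU: (z \in U); first by rewrite orbT.
by rewrite orbF; apply: contraFF zU => xz; rewrite -(bridge_U_closed xz).
Qed.

Lemma ncomp_bridge X :
  a \in X -> b \in X -> ~~ connect (adj e F') a b -> ncomp F' X = (ncomp F X).+1.
Proof.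
move=> aX bX nab'.
have aU : a \in U by rewrite !inE connect0.
have bU : b \in U by rewrite !inE connect0 orbT.
have [aC bC] : a \in comp F' a /\ b \in comp F' b by rewrite !inE !connect0.
set W := X :\: U.
have outW C : C \in comp F' @: W -> {in C, forall z, z \notin U}.
  case/imsetP=> w /setDP[_ wU] -> z; rewrite inE => wz.
  by rewrite -(bridge_U_closed wz).
have imW : comp F @: W = comp F' @: W.
  by apply: eq_in_imset => x /setDP[_ /negbTE xU]; rewrite comp_bridge xU.
have imU : comp F @: (X :&: U) = [set U].
  apply/setP => C; rewrite inE; apply/imsetP/eqP => [[x /setIP[_ xU] ->] | ->].
    by rewrite comp_bridge xU.
  by exists a; [rewrite inE aX aU | rewrite comp_bridge aU].
have imU' : comp F' @: (X :&: U) = [set comp F' a; comp F' b].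
  apply/setP => C; rewrite !inE; apply/imsetP/orP => [[x /setIP[_]] | [] /eqP->].
  - by case/setUP; rewrite inE -comp_eq => /eqP-> ->; [left | right].
  - by exists a; rewrite // inE aX aU.
  - by exists b; rewrite // inE bX bU.
rewrite /ncomp -(setID X U) !imsetU imU imU' imW -setUA !cardsU1.
have -> : U \notin comp F' @: W by apply/negP => /outW/(_ a aU); rewrite aU.
have -> : comp F' b \notin comp F' @: W by apply/negP => /outW/(_ b bC); rewrite bU.
suff -> : comp F' a \notin comp F' b |: comp F' @: W by [].
rewrite !inE comp_eq (negbTE nab') /=.
by apply/negP => /outW/(_ a aC); rewrite aU.
Qed.
End BridgeDeletion.

Definition inX F X := [set o in F | ends e o \subset X].

Lemma inX_sub F X : inX F X \subset F.
Proof. by apply/subsetP => o; rewrite inE => /andP[]. Qed.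

Lemma inX_idem F X : inX (inX F X) X = inX F X.
Proof. by apply/setP => o; rewrite !inE -andbA andbb. Qed.

Lemma inX_closed F X : closed (adj e (inX F X)) X.
Proof.
move=> x y /adjP[o]; rewrite inE => /andP[_ oX] /and3P[_ xo yo].
by rewrite (subsetP oX _ xo) (subsetP oX _ yo).
Qed.

Lemma ncomp_no_edge F X :
  inX F X = set0 -> {in F, forall o, #|ends e o| = 2} -> closed (adj e F) X ->
  ncomp F X = #|X|.
Proof.
move=> noE ends2 clX; apply: card_in_imset => x y xX yX /eqP.
rewrite comp_eq => /connectP[[_ -> // | z p /= /andP[xz _] _]].
case/adjP: xz => o oF /and3P[nxz xo zo].
have zX : z \in X by rewrite -(clX x z) //; apply/adjP; exists o; rewrite ?nxz ?xo.
have : o \in inX F X.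
  rewrite inE oF (set2_of_card2 (ends2 o oF) xo zo nxz).
  by apply/subsetP => w /set2P[]->.
by rewrite noE inE.
Qed.

Lemma rank_count F X :
  {in F, forall o, #|ends e o| = 2} -> closed (adj e F) X ->
  #|X| <= #|inX F X| + ncomp F X /\ (acyclic F -> #|X| = #|inX F X| + ncomp F X).
Proof.
move Hn : #|inX F X| => n; elim: n F Hn => [|n IH] F cF ends2 clX.
  by rewrite ncomp_no_edge //; apply/eqP; rewrite -cards_eq0 cF.
have /set0Pn[o oFX] : inX F X != set0 by rewrite -card_gt0 cF.
have /andP[oF oX] : (o \in F) && (ends e o \subset X) by move: oFX; rewrite inE.
have /cards2P[a [b [nab eo]]] : #|ends e o| == 2 by rewrite ends2.
have [aX bX] : a \in X /\ b \in X by rewrite !(subsetP oX) // eo (set21, set22).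
have F'F : F :\ o \subset F by apply: subsetDl.
have cF' : #|inX (F :\ o) X| = n.
  have -> : inX (F :\ o) X = inX F X :\ o by apply/setP => o'; rewrite !inE andbA.
  by move: cF; rewrite (cardsD1 o) oFX => -[].
have ends2' : {in F :\ o, forall o', #|ends e o'| = 2}.
  by move=> o' /(subsetP F'F); apply: ends2.
have clX' : closed (adj e (F :\ o)) X by move=> x y /(adj_mono F'F); apply: clX.
have [le eq] := IH _ cF' ends2' clX'.
(* Either o lies on a cycle (components unchanged, F not a forest) or o is a
   bridge (one more component without it). *)
case ab : (connect (adj e (F :\ o)) a b).
  have comps_eq : comp F =1 comp (F :\ o).
    by move=> x; apply/setP => y; rewrite !inE (connect_delete_cycle_edge eo ab).
  rewrite /ncomp (eq_imset _ comps_eq).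
  split; first by rewrite addSn ltnW.
  by move/(_ o oF); rewrite (same_comp2 _ eo) ab.
rewrite (ncomp_bridge oF eo nab aX bX (negbT ab)) addnS in le eq.
by split => // acF; rewrite eq //; apply: acyclic_sub acF.
Qed.
End Connectivity.

Section Procedure.
Variables (V : finType) (E : {set {set V}}) (e : {set V}).
Variable col : option {set V} -> bool.
Hypotheses (sgE : simple_graph E) (eE : e \in E).
Hypotheses (red_tree : spanning_tree e [set o in edgesStar E | col o])
           (black_tree : spanning_tree e [set o in edgesStar E | ~~ col o]).
Hypothesis black_add : col None = false.

Let Es := edgesStar E.
Implicit Types (S D : {set option {set V}}) (X : {set V}).

Definition colour b S := [set o in S | col o == b].
Definition tree b := colour b Es.
Definition undel b D := colour b (Es :\: D).

Lemma tree_spanning b : spanning_tree e (tree b).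
Proof.
have -> : tree b = [set o in Es | if b then col o else ~~ col o].
  by apply/setP => o; rewrite !inE; case: b; case: (col o).
by case: b.
Qed.

Lemma ends2 o : o \in Es -> #|ends e o| = 2.
Proof. by case: o => [f|]; rewrite inE => ?; apply: sgE. Qed.

Lemma colour_sub b S : colour b S \subset S.
Proof. by apply/subsetP => o; rewrite inE => /andP[]. Qed.

Lemma undel_ends2 b D : {in undel b D, forall o, #|ends e o| = 2}.
Proof. by move=> o /(subsetP (colour_sub _ _)); rewrite inE => /andP[_ /ends2]. Qed.

Lemma card_inX_colour S X :
  #|inX e S X| = #|inX e (colour true S) X| + #|inX e (colour false S) X|.
Proof.
have disj : inX e (colour true S) X :&: inX e (colour false S) X = set0.
  by apply/setP => o; rewrite !inE; case: (col o); rewrite ?andbF.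
have cover : inX e (colour true S) X :|: inX e (colour false S) X = inX e S X.
  by apply/setP => o; rewrite !inE; case: (col o); rewrite /= ?andbT ?andbF ?orbF.
by rewrite -cover -cardsUI disj cards0 addn0.
Qed.

Lemma card_inX_noadd X : #|inX e Es X :\ None| = #|[set f in E | f \subset X]|.
Proof.
suff -> : inX e Es X :\ None = Some @: [set f in E | f \subset X].
  exact/card_imset/Some_inj.
apply/setP => -[f|]; last by rewrite !inE; apply/esym/imsetP => -[].
by rewrite !inE (mem_imset _ _ (@Some_inj _)) inE.
Qed.

Lemma card_inX_edgesStar X :
  #|inX e Es X| = (e \subset X) + #|[set f in E | f \subset X]|.
Proof. by rewrite (cardsD1 None) card_inX_noadd !inE. Qed.

Lemma undelE b D : undel b D = [set o in Es | (o \notin D) && (col o == b)].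
Proof. by apply/setP => o; rewrite !inE andbCA andbA. Qed.

Lemma newdelE i D o :
  (o \in newdel E e col i D) =
  [&& o \in Es, o \notin D, col o == color_step i &
      ~~ same_comp e (undel (~~ color_step i) D) o].
Proof. by rewrite /newdel inE -undelE. Qed.

Lemma deletedS j :
  deleted E e col j.+2 =
  deleted E e col j.+1 :|: newdel E e col j.+2 (deleted E e col j.+1).
Proof. by []. Qed.

Lemma deleted_sub i : deleted E e col i \subset Es.
Proof.
elim: i => [|[|i] IH]; first exact: sub0set.
  by rewrite sub1set inE.
by rewrite deletedS subUset IH; apply/subsetP => o; rewrite newdelE => /andP[].
Qed.

Lemma deleted_mono i j : i <= j -> deleted E e col i \subset deleted E e col j.
Proof.
move/subnK <-; elim: (j - i) => [|d IH]; first by rewrite add0n.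
apply: subset_trans IH _; rewrite addSn; case: (d + i) => [|k].
  exact: sub0set.
by rewrite deletedS subsetUl.
Qed.

Lemma add_deleted i : 0 < i -> None \in deleted E e col i.
Proof. by move=> i0; apply: (subsetP (deleted_mono i0)); rewrite inE. Qed.

Lemma color_stepS n : color_step n.+1 = ~~ color_step n.
Proof. by rewrite /color_step oddS. Qed.

(* Step j + 2 only deletes edges of colour c_(j+2). *)
Lemma undel_other_step j :
  undel (~~ color_step j.+2) (deleted E e col j.+2) =
  undel (~~ color_step j.+2) (deleted E e col j.+1).
Proof.
apply/setP => o; rewrite deletedS !inE.
by case: (col o); case: (color_step j.+2); rewrite /= ?andbF ?orbF.
Qed.

(* Step 2 always deletes an edge: otherwise every red edge would have its
   endpoints joined by black edges other than e_add, and since the red tree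
   spans, so would the endpoints of e_add, contradicting acyclicity of T^b. *)
Lemma step2_deletes : newdel E e col 2 (deleted E e col 1) != set0.
Proof.
apply/negP => /eqP stall.
have /cards2P[u [v [nuv eN]]] : #|ends e None| == 2 by rewrite ends2 // inE.
have addB : None \in tree false by rewrite !inE black_add.
have := (tree_spanning false).2 None addB; rewrite (same_comp2 _ eN) => /negP; apply.
have red_in_black : subrel (connect (adj e (tree true)))
                           (connect (adj e (undel false (deleted E e col 1)))).
  apply: connect_same_comp => o; rewrite inE => /andP[oE /eqP co].
  have : o \notin newdel E e col 2 (deleted E e col 1) by rewrite stall inE.
  have oD : o \notin deleted E e col 1.
    by rewrite inE; apply/eqP => oN; move: co; rewrite oN black_add.
  by rewrite newdelE oE oD co /= negbK.
have black_undel : undel false (deleted E e col 1) \subset tree false :\ None.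
  by apply/subsetP => o; rewrite !inE => /andP[/andP[-> ->] ->].
exact: connect_mono black_undel _ _ (red_in_black _ _ ((tree_spanning true).1 u v)).
Qed.

Lemma deleted_card k :
  (forall j, 1 < j <= k.+1 -> newdel E e col j (deleted E e col j.-1) != set0) ->
  k.+1 <= #|deleted E e col k.+1|.
Proof.
elim: k => [|k IH] nonstall; first by rewrite cards1.
have /set0Pn[o oN] := nonstall k.+2 (leqnn _).
have oD : o \notin deleted E e col k.+1 by move: oN; rewrite newdelE => /and4P[].
rewrite deletedS; apply: leq_trans (_ : #|o |: deleted E e col k.+1| <= _).
  rewrite cardsU1 oD ltnS IH // => j /andP[j1 jk].
  by apply: nonstall; rewrite j1 (leq_trans jk).
by apply: subset_leq_card; rewrite subUset sub1set in_setU oN orbT subsetUl.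
Qed.

Lemma procedure_terminates : exists i, terminates_at E e col i.
Proof.
pose stalls i := (1 < i) && (newdel E e col i (deleted E e col i.-1) == set0).
have [i stall_i] : exists i, stalls i.
  have [/existsP[j sj] | ] := boolP [exists j : 'I_(#|Es|).+2, stalls j].
    by exists j.
  rewrite negb_exists => /forallP nonstall.
  suff : #|Es|.+1 <= #|deleted E e col #|Es|.+1|.
    by rewrite ltnNge subset_leq_card ?deleted_sub.
  apply: deleted_card => j /andP[j1 jE]; have := nonstall (@Ordinal #|Es|.+2 j jE).
  by rewrite /stalls /= j1.
case: (ex_minnP (ex_intro stalls i stall_i)) => m /andP[m1 /eqP stall_m] minm.
exists m; split=> //; split=> // j /andP[j1 jm]; apply/negP => /eqP stall_j.
by have := minm j; rewrite /stalls j1 stall_j eqxx leqNgt jm => /(_ isT).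
Qed.

(* When step k + 3 deletes nothing, every surviving edge has its endpoints
   connected by surviving edges of the other colour: for colour c_(k+3) this is
   the stall itself, for colour c_(k+2) it held at step k + 2 and step k + 2
   did not touch the other colour. *)
Lemma stalled_same_comp k :
  newdel E e col k.+3 (deleted E e col k.+2) = set0 ->
  {in Es :\: deleted E e col k.+2,
    forall o, same_comp e (undel (~~ col o) (deleted E e col k.+2)) o}.
Proof.
move=> stall o; rewrite inE => /andP[oD oE].
have [co | co] := eqVneq (col o) (color_step k.+3).
  have : o \notin newdel E e col k.+3 (deleted E e col k.+2) by rewrite stall inE.
  by rewrite newdelE oE oD co eqxx /= negbK.
have {}co : col o = color_step k.+2.
  by move: co; rewrite color_stepS; case: (col o); case: (color_step k.+2).
move: oD; rewrite [in _ \notin _]deletedS inE negb_or => /andP[oD oN].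
by move: oN; rewrite newdelE oE oD co eqxx /= negbK undel_other_step.
Qed.

(* If every surviving edge has its endpoints connected by surviving edges of
   the other colour, and e_add is deleted, then in a Laman graph nothing
   survives: both colours span the same components, so a component X of a
   surviving edge carries >= 2|X| - 2 surviving edges of G inside X. *)
Lemma stalled_all_deleted D :
  laman E -> None \in D ->
  {in Es :\: D, forall o, same_comp e (undel (~~ col o) D) o} -> Es \subset D.
Proof.
move=> [_ sparse] addD sc.
have colour_switch b :
    subrel (connect (adj e (undel b D))) (connect (adj e (undel (~~ b) D))).
  apply: connect_same_comp => o; rewrite inE => /andP[oED /eqP <-]; exact: sc.
have same_conn b : connect (adj e (undel b D)) =2 connect (adj e (undel true D)).
  case: b => // x y.
  by apply/idP/idP; [apply: colour_switch | apply: (colour_switch true)].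
apply/subsetP => o oE; apply/negPn/negP => oD.
have /cards2P[a [b [nab eo]]] : #|ends e o| == 2 by rewrite ends2.
set X := comp e (undel true D) a.
have clX c : closed (adj e (undel c D)) X.
  move=> x y /connect1; rewrite same_conn => xy; rewrite !inE.
  by rewrite !(adj_connect_sym _ _ a) (same_connect (adj_connect_sym _ _) xy).
have rank c : #|X| <= #|inX e (undel c D) X| + 1.
  have [le _] := rank_count (@undel_ends2 c D) (clX c).
  apply: leq_trans le _; rewrite leq_add2l; apply: (ncomp_le1 (a := a)) => y.
  by rewrite inE same_conn.
have [aX bX] : a \in X /\ b \in X.
  rewrite !inE connect0 -(same_conn (col o)); split=> //; apply/connect1/adjP.
  by exists o; [rewrite inE in_setD oD oE eqxx | rewrite nab eo set21 set22].
have X2 : 2 <= #|X|.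
  have := cards2 a b; rewrite nab => <-.
  by apply/subset_leq_card/subsetP => y /set2P[]->.
have survivors : #|inX e (undel true D) X| + #|inX e (undel false D) X| <=
                 #|[set f in E | f \subset X]|.
  rewrite -card_inX_colour -card_inX_noadd; apply/subset_leq_card/subsetP => o'.
  rewrite !inE => /andP[/andP[o'D ->] ->]; rewrite !andbT.
  by apply/eqP => o'N; move: o'D; rewrite o'N addD.
by have := sparse X X2; have := rank true; have := rank false; lia.
Qed.

Lemma all_deleted_at_termination i :
  laman E -> terminates_at E e col i -> Es \subset deleted E e col i.
Proof.
move=> lam [i2 [stall _]].
case: i i2 stall => [|[|[|k]]] // _ stall.
  by move: step2_deletes; rewrite stall eqxx.
rewrite deletedS stall setU0.
exact: stalled_all_deleted lam (add_deleted _) (stalled_same_comp stall).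
Qed.

Lemma forest_count b X :
  #|X| = #|inX e (tree b) X| + ncomp e (inX e (tree b) X) X.
Proof.
have ends2_X : {in inX e (tree b) X, forall o, #|ends e o| = 2}.
  by move=> o /(subsetP (inX_sub e _ X))/(subsetP (colour_sub _ _)); apply: ends2.
have acX : acyclic e (inX e (tree b) X).
  exact: acyclic_sub (inX_sub e _ X) (tree_spanning b).2.
by have [_ ->] := rank_count ends2_X (@inX_closed _ e _ X); rewrite ?inX_idem.
Qed.

(* If both colour classes connect X and e_add does not lie inside X, then no
   edge inside X is ever deleted: its endpoints stay connected through the
   (never deleted) edges of the other colour inside X. *)
Lemma block_never_deleted X :
  None \notin inX e Es X -> (forall b, ncomp e (inX e (tree b) X) X = 1) ->
  forall j, {in inX e Es X, forall o, o \notin deleted E e col j}.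
Proof.
move=> addX conn; elim=> [|[|j] IH] o oX; first by rewrite inE.
  by rewrite inE; apply: contraNneq addX => <-.
rewrite deletedS in_setU (negbTE (IH o oX)) orFb newdelE.
apply/and4P => -[_ _ _]; apply/negP; rewrite negbK.
have [oE oinX] : o \in Es /\ ends e o \subset X by move: oX; rewrite inE => /andP[].
apply: (@same_comp_mono _ _ (inX e (tree (~~ color_step j.+2)) X)).
  apply/subsetP => o'; rewrite !inE => /andP[/andP[o'E o'c] o'X].
  by rewrite o'c o'E !andbT; apply: IH; rewrite !inE o'E o'X.
apply/forall_inP => x xo; apply/forall_inP => y yo.
by apply: ncomp1_connect (conn _) _ _; apply: (subsetP oinX).
Qed.

(* If X spanned >= 2|X| - 2
   edges of G, [forest_count] for both colours would force both colour classes
   to connect X and e_add to leave X; [block_never_deleted] then protects the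
   edges inside X forever. *)
Lemma sparse_of_all_deleted i :
  Es \subset deleted E e col i ->
  forall X, 2 <= #|X| -> #|[set f in E | f \subset X]| <= 2 * #|X| - 3.
Proof.
move=> all_del X X2; rewrite leqNgt; apply/negP => dense.
have [x xX] : exists x, x \in X by apply/set0Pn; rewrite -card_gt0 (leq_trans _ X2).
have count : #|inX e Es X| = #|inX e (tree true) X| + #|inX e (tree false) X|.
  exact: card_inX_colour.
rewrite card_inX_edgesStar in count.
have cnt1 := forest_count true X; have cnt0 := forest_count false X.
have pos1 := ncomp_pos e (inX e (tree true) X) xX.
have pos0 := ncomp_pos e (inX e (tree false) X) xX.
(* Name the counts so that [lia] sees each of them as a single atom. *)
set k := #|X| in X2 dense cnt1 cnt0.
set a := #|[set f in E | f \subset X]| in dense count.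
set t1 := #|inX e (tree true) X| in count cnt1.
set t0 := #|inX e (tree false) X| in count cnt0.
have eX : (e \subset X) = false.
  by apply: negbTE; apply/negP => eX; move: count; rewrite eX /=; lia.
rewrite eX in count.
have conn b : ncomp e (inX e (tree b) X) X = 1 by case: b; lia.
have addX : None \notin inX e Es X by rewrite inE eX andbF.
have /set0Pn[o oX] : inX e Es X != set0.
  by rewrite -card_gt0 card_inX_edgesStar eX; lia.
have := block_never_deleted addX conn i oX.
by rewrite (subsetP all_del) // (subsetP (inX_sub e _ X)).
Qed.

End Procedure.

Theorem mainTheorem2 (V : finType) (E : {set {set V}}) (e : {set V})
  (col : option {set V} -> bool) :
  simple_graph E ->
  2 <= #|V| ->
  #|E| = 2 * #|V| - 3 ->
  e \in E ->
  (* T^r = red edges, T^b = black edges of G*, e_add = None is black *)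
  spanning_tree e [set o in edgesStar E | col o] ->
  spanning_tree e [set o in edgesStar E | ~~ col o] ->
  col None = false ->
  (laman E <->
   exists i, terminates_at E e col i /\ edgesStar E \subset deleted E e col i).
Proof.
move=> sgE _ cardE eE red_tree black_tree black_add.
split=> [lam | [i [_ all_del]]].
  have [i term] := procedure_terminates E e col.
  exists i; split=> //.
  exact: (all_deleted_at_termination sgE eE red_tree black_tree black_add
                                     lam term).
split=> //.
exact: (sparse_of_all_deleted sgE eE red_tree black_tree black_add all_del).
Qed.
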